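(* Let $g$ be a Riemannian metric on $\mathbb{R}^D$ written as $g_x(u,u)=u^{\top}H(x)u$ with $\|H(x)-H(y)\|_{\mathcal{B}}\le L_H\|x-y\|_2$ for all $x,y$. Let $N\ge1$, $\gamma^{\mathrm{p}}\in\mathcal{C}^N_{\mathrm{p}}$, and $K_3^2:=\frac1N\sum_{n=0}^{N-1}\|\beta^{\mathrm{p}}(t_n)\|_2^2$. Then $$\left|\mathcal{E}^g(\gamma^{\mathrm{pl}})-\mathcal{E}^g_{\mathrm{tra},N}(\gamma^{\mathrm{p}})\right|\le\frac{L_HK_3^3}{4N^{1/2}}.$$
   Context: $t_n=n/N$, $h=1/N$; $\mathcal{C}^N_{\mathrm{p}}$ is the set of maps $\gamma^{\mathrm{p}}:\{t_0,\dots,t_N\}\to\mathbb{R}^D$; $\beta^{\mathrm{p}}(t_n)=(\gamma^{\mathrm{p}}(t_{n+1})-\gamma^{\mathrm{p}}(t_n))/h$; $\gamma^{\mathrm{pl}}(t_n+s)=(1-Ns)\gamma^{\mathrm{p}}(t_n)+Ns\gamma^{\mathrm{p}}(t_{n+1})$ for $0\le s\le h$ is the linear interpolation; $\mathcal{E}^g(\gamma)=\int_0^1 g_{\gamma(t)}(\dot\gamma,\dot\gamma)dt$; $\mathcal{E}^g_{\mathrm{tra},N}(\gamma^{\mathrm{p}})=\frac1N\sum_{n=0}^{N-1}g_{(\gamma^{\mathrm{p}}(t_n)+\gamma^{\mathrm{p}}(t_{n+1}))/2}(\beta^{\mathrm{p}}(t_n),\beta^{\mathrm{p}}(t_n))$.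 $\|\cdot\|_{\mathcal{B}}$ is the operator norm. *)

From HB Require Import structures.
From mathcomp Require Import all_boot all_order all_algebra.
From mathcomp Require Import all_classical all_reals all_analysis.
Set Implicit Arguments. Unset Strict Implicit. Unset Printing Implicit Defensive.
Import Order.TTheory GRing.Theory Num.Theory.
Local Open Scope classical_set_scope.
Local Open Scope ring_scope.

Section Defs.
Variables (R : realType) (D : nat).

Definition norm2 (u : 'cV[R]_D) : R := Num.sqrt (\sum_(i < D) u i 0 ^+ 2).

Definition opnorm (A : 'M[R]_D) : R :=
  sup [set norm2 (A *m u) | u in [set u : 'cV[R]_D | norm2 u <= 1]].

Definition quadf (A : 'M[R]_D) (u : 'cV[R]_D) : R := (u^T *m A *m u) 0 0.

Definition dcurve (c : R -> 'cV[R]_D) (t : R) : 'cV[R]_D :=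
  \col_i (derive1 (fun s => c s i 0) t).

Definition energy (H : 'cV[R]_D -> 'M[R]_D) (c : R -> 'cV[R]_D) : R :=
  Rintegral lebesgue_measure `[0, 1] (fun t => quadf (H (c t)) (dcurve c t)).

(* discrete curve: gp n = gamma^p(t_n), only n = 0..N used *)
Definition tnode (N n : nat) : R := n%:R / N%:R.

Definition beta (N : nat) (gp : nat -> 'cV[R]_D) (n : nat) : 'cV[R]_D :=
  N%:R *: (gp n.+1 - gp n).

(* piecewise linear interpolation: on [t_n, t_n + h],
   gamma^pl(t_n + s) = (1 - N s) gp n + N s gp (n+1) *)
Definition pl (N : nat) (gp : nat -> 'cV[R]_D) (t : R) : 'cV[R]_D :=
  let n := minn (Num.truncn (t * N%:R)) N.-1 in
  let s := t - tnode N n in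
  (1 - N%:R * s) *: gp n + (N%:R * s) *: gp n.+1.

Definition energy_tra (H : 'cV[R]_D -> 'M[R]_D) (N : nat) (gp : nat -> 'cV[R]_D) : R :=
  N%:R^-1 * \sum_(n < N) quadf (H ((2%:R)^-1 *: (gp n + gp n.+1))) (beta N gp n).

End Defs.

(* On [t_n, t_(n+1)] the curve gamma^pl is affine with velocity beta_n, so the
   integrand s |-> g_(gamma^pl(s))(beta_n, beta_n) is Lipschitz with constant
   L_H |beta_n|^3, and the n-th trapezoidal term is h times its value at the
   midpoint.  The midpoint rule for a k-Lipschitz function on an interval of
   length h errs by at most k h^2 / 4, so the total error is at most
   L_H/(4 N^2) sum_n |beta_n|^3, and sum_n |beta_n|^3 <= (sum_n |beta_n|^2)^(3/2)
   = (N K_3^2)^(3/2). *)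

From HB Require Import structures.
From mathcomp Require Import all_boot all_order all_algebra.
From mathcomp Require Import all_classical all_reals all_analysis.
From mathcomp Require Import measurable_realfun ring.
Import Order.TTheory GRing.Theory Num.Theory.
Import numFieldNormedType.Exports.
Local Open Scope ring_scope.
Local Open Scope classical_set_scope.

Section EuclideanNorm.
Context {R : realType} {D : nat}.
Implicit Types (a b : 'I_D -> R) (u v : 'cV[R]_D) (A B : 'M[R]_D).

Lemma sumr_sqr_ge0 a : 0 <= \sum_i a i ^+ 2.
Proof. by apply: sumr_ge0 => i _; exact: sqr_ge0. Qed.

Lemma ler_sqr_sumr a j : a j ^+ 2 <= \sum_i a i ^+ 2.
Proof.
by rewrite (bigD1 j) //= lerDl; apply: sumr_ge0 => i _; exact: sqr_ge0.
Qed.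

Lemma CauchySchwarz_sum a b :
  `|\sum_i a i * b i| <= Num.sqrt (\sum_i a i ^+ 2) * Num.sqrt (\sum_i b i ^+ 2).
Proof.
set A := \sum_i a i ^+ 2; set B := \sum_i b i ^+ 2; set C := \sum_i a i * b i.
rewrite -sqrtrM ?sumr_sqr_ge0 // -sqrtr_sqr ler_sqrt ?mulr_ge0 ?sumr_sqr_ge0 //.
have [A0|A_gt0] := eqVneq A 0.
  have a0 i : a i = 0 by apply/eqP; rewrite -sqrf_eq0 eq_le sqr_ge0 -A0 ler_sqr_sumr.
  by rewrite /C big1 ?expr0n ?mulr_ge0 ?sumr_sqr_ge0 // => i _; rewrite a0 mul0r.
have {}A_gt0 : 0 < A by rewrite lt_def A_gt0 sumr_sqr_ge0.
have : 0 <= \sum_i (A * b i - C * a i) ^+ 2 by apply: sumr_ge0 => i _; exact: sqr_ge0.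
have -> : \sum_i (A * b i - C * a i) ^+ 2 = A * (A * B - C ^+ 2).
  rewrite (eq_bigr (fun i => A ^+ 2 * b i ^+ 2 - 2 * A * C * (a i * b i)
                              + C ^+ 2 * a i ^+ 2)); last by move=> i _; ring.
  by rewrite !big_split /= sumrN -!mulr_sumr -/A -/B -/C; ring.
by rewrite pmulr_rge0 // subr_ge0.
Qed.

Lemma norm2_ge0 u : 0 <= norm2 u.
Proof. exact: sqrtr_ge0. Qed.

Lemma norm2Z (c : R) u : norm2 (c *: u) = `|c| * norm2 u.
Proof.
rewrite /norm2 -sqrtr_sqr -sqrtrM ?sqr_ge0 // mulr_sumr.
by congr Num.sqrt; apply: eq_bigr => i _; rewrite !mxE exprMn.
Qed.

Lemma norm20 : norm2 (0 : 'cV[R]_D) = 0.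
Proof. by rewrite -(scale0r 0) norm2Z normr0 mul0r. Qed.

Lemma norm2_eq0 u : norm2 u = 0 -> u = 0.
Proof.
move/eqP; rewrite sqrtr_eq0 => u_le0; apply/matrixP => i j; rewrite (ord1 j) mxE.
by apply/eqP; rewrite -sqrf_eq0 eq_le sqr_ge0 andbT (le_trans (ler_sqr_sumr (u ^~ 0) i)).
Qed.

Lemma norm_dot_le u v : `|(u^T *m v) 0 0| <= norm2 u * norm2 v.
Proof.
rewrite mxE (eq_bigr (fun i => u i 0 * v i 0)) => [|i _]; last by rewrite mxE.
exact: CauchySchwarz_sum.
Qed.

Lemma opnorm_has_ubound A :
  has_ubound [set norm2 (A *m u) | u in [set u | norm2 u <= 1]].
Proof.
exists (Num.sqrt (\sum_i \sum_j A i j ^+ 2)) => _ [u /= u_le1 <-].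
rewrite ler_sqrt; last by apply: sumr_ge0 => i _; exact: sumr_sqr_ge0.
apply: ler_sum => i _; rewrite mxE.
have := CauchySchwarz_sum (A i) (u ^~ 0); rewrite -/(norm2 u) => CS.
rewrite -real_normK ?num_real // expr2 (le_trans (ler_pM _ _ CS CS)) //.
rewrite -expr2 exprMn sqr_sqrtr ?sumr_sqr_ge0 // ler_piMr ?sumr_sqr_ge0 //.
by rewrite expr_le1 ?norm2_ge0.
Qed.

Lemma opnorm_ge0 A : 0 <= opnorm A.
Proof.
apply: (ub_le_sup (opnorm_has_ubound A)).
by exists 0; rewrite /= ?norm20 ?ler01 // mulmx0 norm20.
Qed.

Lemma opnorm_mulmx_le A u : norm2 (A *m u) <= opnorm A * norm2 u.
Proof.
have [/norm2_eq0 ->|u_neq0] := eqVneq (norm2 u) 0.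
  by rewrite mulmx0 norm20 mulr0.
have u_gt0 : 0 < norm2 u by rewrite lt_def u_neq0 norm2_ge0.
suff : norm2 (A *m ((norm2 u)^-1 *: u)) <= opnorm A.
  by rewrite -scalemxAr norm2Z ger0_norm ?invr_ge0 ?norm2_ge0 // ler_pdivrMl // mulrC.
apply: (ub_le_sup (opnorm_has_ubound A)); exists ((norm2 u)^-1 *: u) => //=.
by rewrite norm2Z ger0_norm ?invr_ge0 ?norm2_ge0 // mulVf.
Qed.

Lemma quadf_le A u : `|quadf A u| <= opnorm A * norm2 u ^+ 2.
Proof.
rewrite /quadf -mulmxA (le_trans (norm_dot_le _ _)) // mulrC expr2 mulrA.
by rewrite ler_wpM2r ?norm2_ge0 ?opnorm_mulmx_le.
Qed.

Lemma quadfBl A B u : quadf A u - quadf B u = quadf (A - B) u.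
Proof. by rewrite /quadf mulmxBr mulmxBl !mxE. Qed.

End EuclideanNorm.

Lemma klipschitz_continuous {K : realFieldType} {V W : normedModType K} {k : K}
    {f : V -> W} :
  k.-lipschitz f -> continuous f.
Proof.
move=> f_lip x; apply/cvgrPdist_lt => e e_gt0.
have k1_gt0 : 0 < `|k| + 1 by rewrite ltr_wpDl.
near=> y; apply: (le_lt_trans (f_lip (x, y) (conj I I))) => /=.
apply: (@le_lt_trans _ _ ((`|k| + 1) * `|x - y|)).
  by rewrite ler_wpM2r // (le_trans (ler_norm k)) // lerDl.
rewrite mulrC -ltr_pdivlMr //; near: y.
by apply: cvgr_dist_lt; [exact: cvg_id | rewrite divr_gt0].
Unshelve. all: by end_near.
Qed.

Section RealIntegrals.
Context {R : realType}.
Notation mu := (@lebesgue_measure R).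

Lemma derivable_oo_LRcontinuousT (F : R -> R) (a b : R) :
  (forall x, derivable F x 1) -> derivable_oo_LRcontinuous F a b.
Proof.
have F_cont x : derivable F x 1 -> F @ x --> F x.
  by move=> dF; apply: differentiable_continuous; apply/derivable1_diffP.
move=> dF; split; first by move=> x _; exact: dF.
- exact: cvg_at_right_filter (F_cont a (dF a)).
- exact: cvg_at_left_filter (F_cont b (dF b)).
Qed.

Lemma continuous_integrable_itv {h : R -> R} (c d : R) :
  continuous h -> mu.-integrable `[c, d] (EFin \o h).
Proof.
move=> h_cont; apply: continuous_compact_integrable; first exact: segment_compact.
exact: continuous_subspaceT.
Qed.

Lemma Rintegral_subr_itv (u v : R) : u < v ->
  \int[mu]_(x in `[u, v]) (x - u) = (v - u) ^+ 2 / 2.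
Proof.
have F'x (x : R) : is_derive x 1 (fun y : R => (y - u) ^+ 2 / 2) (x - u).
  by apply: is_derive_eq; rewrite !scaler0 add0r subr0 /GRing.scale /=; field.
move=> uv; rewrite /Rintegral (@continuous_FTC2 _ _ (fun y => (y - u) ^+ 2 / 2)) //=.
- by rewrite subrr expr0n /= mul0r subr0.
- apply: continuous_subspaceT => x.
  by apply: continuousB; [exact: cvg_id | exact: cvg_cst].
- by apply: derivable_oo_LRcontinuousT => x; apply: ex_derive; exact: F'x.
- by move=> x _; rewrite derive1E; exact: derive_val.
Qed.

Lemma Rintegral_subl_itv (u v : R) : u < v ->
  \int[mu]_(x in `[u, v]) (v - x) = (v - u) ^+ 2 / 2.
Proof.
move=> uv; rewrite (@eq_Rintegral _ _ _ mu _ (fun x => (v - u) - (x - u))); last first.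
  by move=> x _; rewrite opprB addrA subrK.
rewrite RintegralB //; last 2 first.
- exact/continuous_integrable_itv/cst_continuous.
- apply: continuous_integrable_itv => x.
  by apply: continuousB; [exact: cvg_id | exact: cvg_cst].
rewrite Rintegral_cst //= lebesgue_measure_itv /= lte_fin uv /= Rintegral_subr_itv //.
by field.
Qed.

Lemma continuous_dist (h : R -> R) (c : R) :
  continuous h -> continuous (fun x => `|h x - c|).
Proof.
move=> h_cont x; apply: (continuous_comp (f := fun x => h x - c)).
  by apply: continuousB; [exact: h_cont | exact: cvg_cst].
exact: norm_continuous.
Qed.

Lemma Rintegral_dist_midpoint (a b : R) : a < b ->
  \int[mu]_(x in `[a, b]) `|x - (a + b) / 2| = (b - a) ^+ 2 / 4.
Proof.
move=> ab; set m := (a + b) / 2; have [am mb] := midf_lt ab.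
have dist_cont := @continuous_dist id m (fun _ => cvg_id).
have := @Rintegral_itvB R _ (BLeft a) (BRight b) m (continuous_integrable_itv a b dist_cont).
rewrite !bnd_simp (ltW am) (ltW mb) => /(_ erefl erefl).
rewrite Rintegral_itv_obnd_cbnd; last first.
  apply: integrableS (continuous_integrable_itv m b dist_cont) => //.
  exact: subset_itv_oc_cc.
move/eqP; rewrite subr_eq => /eqP ->.
rewrite (@eq_Rintegral _ _ _ mu `[a, m] (fun x => m - x)); last first.
  by move=> x; rewrite inE /= in_itv /= => /andP[_ xm]; rewrite ler0_norm ?subr_le0 // opprB.
rewrite (@eq_Rintegral _ _ _ mu `[m, b] (fun x => x - m)); last first.
  by move=> x; rewrite inE /= in_itv /= => /andP[mx _]; rewrite ger0_norm ?subr_ge0.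
by rewrite Rintegral_subl_itv // Rintegral_subr_itv // /m; field.
Qed.

Lemma midpoint_rule_klipschitz (k a b : R) (g : R -> R) : a < b -> k.-lipschitz g ->
  `|\int[mu]_(x in `[a, b]) g x - (b - a) * g ((a + b) / 2)| <= k * (b - a) ^+ 2 / 4.
Proof.
move=> ab g_lip; set m := (a + b) / 2.
have g_cont := klipschitz_continuous g_lip.
have dist_m_cont := @continuous_dist id m (fun _ => cvg_id).
have -> : (b - a) * g m = \int[mu]_(x in `[a, b]) g m.
  by rewrite Rintegral_cst //= lebesgue_measure_itv /= lte_fin ab /= mulrC.
rewrite -RintegralB ?continuous_integrable_itv //; last exact: cst_continuous.
apply: le_trans (le_normr_Rintegral _ _) _ => //.
  apply: continuous_integrable_itv => x.
  by apply: continuousB; [exact: g_cont | exact: cvg_cst].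
apply: (@le_trans _ _ (\int[mu]_(x in `[a, b]) (k * `|x - m|))).
  apply: le_Rintegral => //; rewrite ?continuous_integrable_itv //.
  - exact: continuous_dist.
  - by move=> x; apply: cvgM; [exact: cvg_cst | exact: dist_m_cont].
  - by move=> x _; apply: (g_lip (x, m)).
by rewrite RintegralZl ?continuous_integrable_itv ?Rintegral_dist_midpoint ?mulrA.
Qed.

Section PiecewiseContinuous.
Context {a b : R} {f g : R -> R}.
Hypotheses (g_cont : continuous g) (fg : forall x, a < x < b -> f x = g x).

Let g_meas : measurable_fun setT g := continuous_measurable_fun g_cont.

Let f_meas : measurable_fun `]a, b[ f.
Proof.
apply: (eq_measurable_fun g); first by move=> x; rewrite inE /= in_itv /= => /fg ->.
exact: (measurable_funS measurableT) g_meas.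
Qed.

Lemma measurable_fun_itv_piece : measurable_fun `[a, b[ (EFin \o f).
Proof. by apply/measurable_EFinP; exact/measurable_fun_itv_obnd_cbndP. Qed.

Lemma integral_itv_piece :
  (\int[mu]_(x in `[a, b[) (f x)%:E)%E = (\int[mu]_(x in `[a, b]) g x)%:E.
Proof.
rewrite (@eq_integral_itv_bounded R a b g f true true) //; last first.
  exact: (measurable_funS measurableT) g_meas.
rewrite integral_itv_bndo_bndc; last first.
  by apply/measurable_EFinP; exact: (measurable_funS measurableT) g_meas.
by rewrite fineK // integrable_fin_num // continuous_integrable_itv.
Qed.

End PiecewiseContinuous.

Lemma Rintegral_piecewise_continuous (a : nat -> R) (f : R -> R)
    (g : nat -> R -> R) (n : nat) :
  (forall j, a j < a j.+1) ->
  (forall j, (j < n)%N -> continuous (g j)) ->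
  (forall j x, (j < n)%N -> a j < x < a j.+1 -> f x = g j x) ->
  \int[mu]_(x in `[a 0, a n]) f x = \sum_(j < n) \int[mu]_(x in `[a j, a j.+1]) g j x.
Proof.
move=> a_lt g_cont fg.
(* Additivity of the extended integral over half-open intervals only needs
   measurability of [f], which is all the pieces provide. *)
have a_ge k : a 0 <= a k by apply/(nondecreasing_seqP a).1 => // j; exact: ltW.
suff [f_meas int_f] : measurable_fun `[a 0, a n[ (EFin \o f) /\
    (\int[mu]_(x in `[a 0%N, a n[) (f x)%:E)%E =
     (\sum_(j < n) \int[mu]_(x in `[a j, a j.+1]) g j x)%:E.
  by rewrite /Rintegral -integral_itv_bndo_bndc // int_f.
elim: n g_cont fg => [|n IH] g_cont fg.
  rewrite set_itv_ge ?bnd_simp ?ltxx // big_ord0 integral_set0.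
  by split => //; exact: measurable_fun_set0.
have [f_meas int_f] := IH (fun j jn => g_cont j (ltnW jn)) (fun j x jn => fg j x (ltnW jn)).
have split_itv : `[a 0, a n.+1[ = `[a 0, a n[ `|` `[a n, a n.+1[ :> set R.
  by apply: itv_bndbnd_setU; rewrite bnd_simp ?a_ge ?ltW.
have f_meas' : measurable_fun `[a 0, a n.+1[ (EFin \o f).
  rewrite split_itv; apply/measurable_funU => //; split => //.
  exact: measurable_fun_itv_piece (g_cont n _) (fg n ^~ _).
split => //; rewrite split_itv integral_setU -?split_itv //; last first.
  apply/disj_setPS => y [/=]; rewrite 2!in_itv /= => /andP[_ yx] /andP[].
  by rewrite leNgt yx.
by rewrite int_f (integral_itv_piece (g_cont n _) (fg n ^~ _)) // big_ord_recr /= EFinD.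
Qed.

End RealIntegrals.

Section PowerSums.
Context {R : realType} {n : nat}.
Implicit Types (x : 'I_n -> R).

Lemma sumr_exp3_le x : (forall i, 0 <= x i) ->
  \sum_i x i ^+ 3 <= (\sum_i x i ^+ 2) * Num.sqrt (\sum_i x i ^+ 2).
Proof.
move=> x_ge0; rewrite mulr_suml; apply: ler_sum => i _.
rewrite exprSr ler_wpM2l ?exprn_ge0 // -(ger0_norm (x_ge0 i)) -sqrtr_sqr.
by rewrite ler_sqrt ?sumr_sqr_ge0 ?ler_sqr_sumr.
Qed.

Lemma ler_wpM_sumr_exp3 (c : R) x : (forall i, 0 <= x i) -> (forall i, 0 <= c * x i) ->
  c * \sum_i x i ^+ 3 <= c * ((\sum_i x i ^+ 2) * Num.sqrt (\sum_i x i ^+ 2)).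
Proof.
move=> x_ge0 cx_ge0; have [c_ge0|c_lt0] := leP 0 c.
  by rewrite ler_wpM2l ?sumr_exp3_le.
have x0 i : x i = 0.
  by apply/eqP; rewrite eq_le x_ge0 andbT -(nmulr_rge0 _ c_lt0).
by rewrite !big1 ?mul0r ?mulr0 // => i _; rewrite x0 expr0n.
Qed.

End PowerSums.

Lemma sqrt_meanM_exp3 (R : realType) (m S : R) : 0 < m -> 0 <= S ->
  Num.sqrt (m^-1 * S) ^+ 3 / Num.sqrt m = S * Num.sqrt S / m ^+ 2.
Proof.
move=> m_gt0 S_ge0; rewrite sqrtrM ?invr_ge0 ?(ltW m_gt0) // sqrtrV ?(ltW m_gt0) //.
have q_gt0 : 0 < Num.sqrt m by rewrite sqrtr_gt0.
have {3}-> : m = Num.sqrt m ^+ 2 by rewrite sqr_sqrtr // ltW.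
have {2}-> : S = Num.sqrt S ^+ 2 by rewrite sqr_sqrtr.
by field; rewrite gt_eqF.
Qed.

Section PiecewiseLinearCurve.
Context {R : realType} {D N : nat} (gp : nat -> 'cV[R]_D).
Hypothesis N_gt0 : (0 < N)%N.
Local Notation t := (tnode R N).
Local Notation b := (beta N gp).

Let NR_gt0 : (0 : R) < N%:R. Proof. by rewrite ltr0n. Qed.

Lemma tnode_lt j : t j < t j.+1.
Proof. by rewrite ltr_pM2r ?invr_gt0 // ltr_nat. Qed.

Lemma tnode0 : t 0 = 0.
Proof. by rewrite /tnode mul0r. Qed.

Lemma tnodeN : t N = 1.
Proof. by rewrite /tnode divff // gt_eqF. Qed.

Lemma tnodeS_sub j : t j.+1 - t j = N%:R^-1.
Proof. by rewrite /tnode -mulrBl -natrB // subSnn mul1r. Qed.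

Lemma pl_itv j s : (j < N)%N -> t j <= s < t j.+1 ->
  pl N gp s = gp j + (s - t j) *: b j.
Proof.
move=> jN /andP[tj_le_s s_lt_tj1].
have trunc_j : Num.truncn (s * N%:R) = j.
  apply/eqP; rewrite truncn_eq ?mulr_ge0 ?(le_trans _ tj_le_s) ?divr_ge0 //.
  by rewrite -ler_pdivrMr // -ltr_pdivlMr // tj_le_s s_lt_tj1.
rewrite /pl trunc_j (minn_idPl _); last by rewrite -ltnS prednK.
by apply/matrixP => i k; rewrite !mxE /tnode; field; rewrite gt_eqF.
Qed.

Lemma dcurve_pl j s : (j < N)%N -> t j < s < t j.+1 -> dcurve (pl N gp) s = b j.
Proof.
move=> jN s_in; apply/matrixP => i k; rewrite (ord1 k) mxE derive1E.
rewrite (@near_eq_derive _ _ _ _ (fun s => gp j i 0 + (s - t j) * b j i 0)).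
  apply: derive_val; apply: is_derive_eq.
  by rewrite add0r mul1r scaler0 add0r subr0 /GRing.scale /= mulr1.
have : s \in `]t j, t j.+1[%R by rewrite in_itv.
move/near_in_itv; apply: filterS => r; rewrite in_itv /= => /andP[tj_lt_r r_lt_tj1].
by rewrite (@pl_itv j r jN) ?(ltW tj_lt_r) ?r_lt_tj1 // !mxE.
Qed.

Lemma pl_midpoint j : gp j + ((t j + t j.+1) / 2 - t j) *: b j = 2^-1 *: (gp j + gp j.+1).
Proof. by apply/matrixP => i k; rewrite !mxE /tnode; field; rewrite gt_eqF. Qed.

End PiecewiseLinearCurve.

Section TrapezoidalError.
Context {R : realType} {D N : nat} {H : 'cV[R]_D -> 'M[R]_D} {LH : R}.
Hypothesis HLip : forall x y, opnorm (H x - H y) <= LH * norm2 (x - y).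
Hypothesis N_gt0 : (0 < N)%N.
Variable gp : nat -> 'cV[R]_D.
Local Notation t := (tnode R N).
Local Notation b := (beta N gp).
Notation mu := (@lebesgue_measure R).

Let density j s := quadf (H (gp j + (s - t j) *: b j)) (b j).

Lemma LH_norm2_ge0 (u : 'cV[R]_D) : 0 <= LH * norm2 u.
Proof. by rewrite -[u]subr0 (le_trans (opnorm_ge0 _) (HLip _ _)). Qed.

Lemma segment_energy_klipschitz j : (LH * norm2 (b j) ^+ 3).-lipschitz (density j).
Proof.
move=> [r s] _ /=; rewrite /density quadfBl (le_trans (quadf_le _ _)) //.
rewrite (le_trans (ler_wpM2r (exprn_ge0 2 (norm2_ge0 _)) (HLip _ _))) //.
rewrite opprD addrACA subrr add0r -scalerBl opprB addrA subrK norm2Z.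
by rewrite [leRHS](_ : _ = LH * (`|r - s| * norm2 (b j)) * norm2 (b j) ^+ 2) //; ring.
Qed.

Lemma energy_pl_sum :
  energy H (pl N gp) = \sum_(j < N) \int[mu]_(x in `[t j, t j.+1]) density j x.
Proof.
rewrite /energy -{1}(@tnode0 R N) -(tnodeN N_gt0).
apply: Rintegral_piecewise_continuous => [j|j _|j s jN s_in].
- exact: tnode_lt.
- exact: klipschitz_continuous (segment_energy_klipschitz j).
- rewrite /density (dcurve_pl gp N_gt0 _ _ jN s_in) (pl_itv gp N_gt0 _ _ jN) //.
  by case/andP: s_in => /ltW -> ->.
Qed.

Lemma segment_error j :
  `|\int[mu]_(x in `[t j, t j.+1]) density j x
    - N%:R^-1 * quadf (H (2^-1 *: (gp j + gp j.+1))) (b j)|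
  <= LH * norm2 (b j) ^+ 3 / (4 * N%:R ^+ 2).
Proof.
have -> : LH * norm2 (b j) ^+ 3 / (4 * N%:R ^+ 2) =
    LH * norm2 (b j) ^+ 3 * (t j.+1 - t j) ^+ 2 / 4.
  by rewrite tnodeS_sub; field; rewrite pnatr_eq0 -lt0n.
rewrite -(tnodeS_sub j) -(pl_midpoint gp N_gt0).
exact: midpoint_rule_klipschitz (tnode_lt N_gt0 j) (segment_energy_klipschitz j).
Qed.

End TrapezoidalError.

Theorem proposition7p8 (R : realType) (D N : nat) (H : 'cV[R]_D -> 'M[R]_D) (LH : R)
  (Hsym : forall x, (H x)^T = H x)
  (Hpd : forall x u, u != 0 -> 0 < quadf (H x) u)
  (HLip : forall x y, opnorm (H x - H y) <= LH * norm2 (x - y))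
  (hN : (1 <= N)%N) (gp : nat -> 'cV[R]_D) :
  let K3 := Num.sqrt (N%:R^-1 * \sum_(n < N) norm2 (beta N gp n) ^+ 2) in
  `| energy H (pl N gp) - energy_tra H N gp | <= LH * K3 ^+ 3 / (4 * Num.sqrt N%:R).
Proof.
cbv zeta; set nb := fun n : 'I_N => norm2 (beta N gp n).
have NR_gt0 : (0 : R) < N%:R by rewrite ltr0n.
rewrite (energy_pl_sum HLip hN) /energy_tra mulr_sumr -sumrB.
apply: le_trans (ler_norm_sum _ _ _) _.
apply: (@le_trans _ _ (\sum_(j < N) LH * nb j ^+ 3 / (4 * N%:R ^+ 2))).
  by apply: ler_sum => j _; exact: segment_error.
have -> : LH * Num.sqrt (N%:R^-1 * \sum_j nb j ^+ 2) ^+ 3 / (4 * Num.sqrt N%:R) =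
    LH * ((\sum_j nb j ^+ 2) * Num.sqrt (\sum_j nb j ^+ 2)) / (4 * N%:R ^+ 2).
  have q_neq0 : Num.sqrt N%:R != 0 :> R by rewrite gt_eqF ?sqrtr_gt0.
  rewrite -(divfK q_neq0 (Num.sqrt _ ^+ 3)) sqrt_meanM_exp3 ?sumr_sqr_ge0 //.
  by field; rewrite q_neq0 gt_eqF.
rewrite -mulr_suml -mulr_sumr ler_wpM2r ?invr_ge0 ?mulr_ge0 ?sqr_ge0 //.
by apply: ler_wpM_sumr_exp3 => j; [exact: norm2_ge0 | exact: LH_norm2_ge0 HLip _].
Qed.
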